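(* Let $\mathcal L\in\mathbb{R}^{n_1\times r\times n_3}$, $\mathcal R\in\mathbb{R}^{n_2\times r\times n_3}$ satisfy $\mathcal L^\top*\mathcal L=\mathcal R^\top*\mathcal R$, and let $\mathcal X=\mathcal L*\mathcal R^\top$. Let $\mathcal X_\star=\mathcal U_\star*\mathcal S_\star*\mathcal V_\star^\top$ be a compact t-SVD of $\mathcal X_\star\in\mathbb{R}^{n_1\times n_2\times n_3}$ with tubal rank $r_\star$, and set $\mathcal L_\star=\mathcal U_\star*\mathcal S_\star^{1/2}$, $\mathcal R_\star=\mathcal V_\star*\mathcal S_\star^{1/2}$, $\mathcal F=\begin{bmatrix}\mathcal L\\ \mathcal R\end{bmatrix}$, $\mathcal F_\star=\begin{bmatrix}\mathcal L_\star\\ \mathcal R_\star\end{bmatrix}$. Then $$\|\mathcal F*\mathcal F^\top-\mathcal F_\star*\mathcal F_\star^\top\|_F\le2\|\mathcal X-\mathcal X_\star\|_F.$$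
   Context: For $\mathcal{A}\in\mathbb{R}^{n_1\times n_2\times n_3}$, $\bar{\mathcal A}$ is its discrete Fourier transform along the third mode with frontal slices $\bar A^{(k)}$. The t-product $\mathcal A*\mathcal B$ has Fourier slices $\bar A^{(k)}\bar B^{(k)}$; $\mathcal A^\top$ has Fourier slices $(\bar A^{(k)})^H$; $\mathcal I$ has first frontal slice the identity matrix and the rest zero. $\|\cdot\|_F$ is the entrywise Frobenius norm. Stacking $\begin{bmatrix}\mathcal L\\ \mathcal R\end{bmatrix}\in\mathbb{R}^{(n_1+n_2)\times r\times n_3}$ is along the first mode. A compact t-SVD $\mathcal X_\star=\mathcal U_\star*\mathcal S_\star*\mathcal V_\star^\top$ has $\mathcal U_\star\in\mathbb{R}^{n_1\times r_\star\times n_3}$, $\mathcal V_\star\in\mathbb{R}^{n_2\times r_\star\times n_3}$ with $\mathcal U_\star^\top*\mathcal U_\star=\mathcal V_\star^\top*\mathcal V_\star=\mathcal I$, and $\mathcal S_\star\in\mathbb{R}^{r_\star\times r_\star\times n_3}$ whose Fourier slices are diagonal with nonnegative entries; $\mathcal S_\star^{1/2}$ has Fourier slices the entrywise square roots. Tubal rank $=\max_k\mathrm{rank}(\bar A^{(k)})$. *)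

From HB Require Import structures.
From mathcomp Require Import all_boot all_order all_algebra.
From mathcomp Require Import reals trigo.
From mathcomp Require Import complex.
Set Implicit Arguments. Unset Strict Implicit. Unset Printing Implicit Defensive.
Import Order.TTheory GRing.Theory Num.Theory.
Local Open Scope ring_scope.

(* A real third-order tensor in R^{n1 x n2 x n3}, given by its n3 frontal
   slices A^(k) (k = 0, ..., n3-1). *)
Definition tensor (R : realType) (n1 n2 n3 : nat) := {ffun 'I_n3 -> 'M[R]_(n1, n2)}.

Section TProduct.
Variable R : realType.
Local Notation C := (R[i]).

(* omega = exp(-2 pi i / n3) *)
Definition omega (n3 : nat) : C :=
  Complex (cos (2 * pi / n3%:R)) (- sin (2 * pi / n3%:R)).

Definition fft n1 n2 n3 (A : tensor R n1 n2 n3) (k : 'I_n3) : 'M[C]_(n1, n2) :=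
  \sum_(j < n3) (omega n3 ^+ (j * k)) *: map_mx (fun x : R => Complex x 0) (A j).

(* inverse DFT; the result is the real tensor with the given Fourier slices
   (real part taken: the Fourier slices produced below are always those of a
   real tensor, i.e. conjugate symmetric). *)
Definition ifft n1 n2 n3 (B : 'I_n3 -> 'M[C]_(n1, n2)) : tensor R n1 n2 n3 :=
  [ffun j : 'I_n3 => map_mx (fun z : C => complex.Re z)
     (n3%:R^-1 *: \sum_(k < n3) ((omega n3)^-1 ^+ (j * k)) *: B k)].

Definition ctr m n (M : 'M[C]_(m, n)) : 'M[C]_(n, m) := (map_mx Num.conj M)^T.

Definition tprod n1 n2 n4 n3 (A : tensor R n1 n2 n3) (B : tensor R n2 n4 n3)
  : tensor R n1 n4 n3 := ifft (fun k => fft A k *m fft B k).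

Definition ttr n1 n2 n3 (A : tensor R n1 n2 n3) : tensor R n2 n1 n3 :=
  ifft (fun k => ctr (fft A k)).

Definition tid n n3 : tensor R n n n3 :=
  [ffun k : 'I_n3 => if (k : nat) == 0%N then 1%:M else 0].

Definition tstack n1 n2 r n3 (L : tensor R n1 r n3) (Rt : tensor R n2 r n3)
  : tensor R (n1 + n2) r n3 := [ffun k => col_mx (L k) (Rt k)].

Definition tfrob n1 n2 n3 (A : tensor R n1 n2 n3) : R :=
  Num.sqrt (\sum_(k < n3) \sum_(i < n1) \sum_(j < n2) (A k i j) ^+ 2).

Definition tsqrt r n3 (S : tensor R r r n3) : tensor R r r n3 :=
  ifft (fun k => map_mx sqrtC (fft S k)).

Definition tubal_rank n1 n2 n3 (A : tensor R n1 n2 n3) : nat :=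
  \max_(k < n3) \rank (fft A k).

Definition fdiag_nonneg r n3 (S : tensor R r r n3) : Prop :=
  forall (k : 'I_n3) (i j : 'I_r),
    (i != j -> fft S k i j = 0) /\ 0 <= fft S k i i.

Definition compact_tsvd n1 n2 rs n3 (Xs : tensor R n1 n2 n3)
  (U : tensor R n1 rs n3) (S : tensor R rs rs n3) (V : tensor R n2 rs n3) : Prop :=
  [/\ Xs = tprod (tprod U S) (ttr V),
      tprod (ttr U) U = tid rs n3,
      tprod (ttr V) V = tid rs n3 &
      fdiag_nonneg S].

End TProduct.

From HB Require Import structures.
From mathcomp Require Import all_boot all_order all_algebra.
From mathcomp Require Import reals trigo.
From mathcomp Require Import complex.
From mathcomp Require Import ring lra.
Import Order.TTheory GRing.Theory Num.Theory.
Local Open Scope ring_scope.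
Set Implicit Arguments. Unset Strict Implicit. Unset Printing Implicit Defensive.

(* Along the third mode the DFT turns t-products into slicewise matrix
   products and the tensor transpose into the slicewise conjugate transpose;
   the DFT of a real tensor is conjugate symmetric, so the real part taken by
   the inverse DFT loses nothing.  By Parseval, n3 times the squared Frobenius
   norm of a tensor is the sum of the squared norms of its Fourier slices, so
   it suffices to show, slice by slice, that for F = [L; K], G = [A; B] with
   L^H L = K^H K and A^H A = B^H B,
     4 |L K^H - A B^H|^2 - |F F^H - G G^H|^2 = 2 |L^H A - K^H B|^2 >= 0,
   which follows by expanding into traces and rotating them cyclically.  The
   factors U S^(1/2) and V S^(1/2) are balanced in this sense because U and V
   have orthonormal Fourier slices and S^(1/2) is real diagonal. *)

Lemma sum_unity_rootX (F : fieldType) (n : nat) (q : F) : q ^+ n = 1 ->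
  \sum_(k < n) q ^+ k = (q == 1)%:R * n%:R.
Proof.
move=> qn1; have [->|q_neq1] := eqVneq q 1.
  by rewrite mul1r (eq_bigr (fun=> 1)) ?sumr_const ?card_ord // => k _; rewrite expr1n.
have := subrX1 q n; rewrite qn1 subrr mul0r => /esym/eqP.
by rewrite mulf_eq0 subr_eq0 (negbTE q_neq1) => /eqP.
Qed.

Lemma unity_root_conjC (C : numClosedFieldType) (n : nat) (z : C) :
  (0 < n)%N -> z ^+ n = 1 -> z^* = z^-1.
Proof.
move=> n_gt0 zn1; have : `|z| ^+ n == 1 by rewrite -normrX zn1 normr1.
by rewrite pexpr_eq1 // => /eqP z1; rewrite invC_norm z1 expr1n invr1 mul1r.
Qed.

Lemma Re_conj_fixed (R : rcfType) (z : R[i]) : z^* = z -> Complex (complex.Re z) 0 = z.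
Proof. by case: z => a b [] b0; congr Complex; lra. Qed.

Section Omega.
Variable R : realType.
Variable n : nat.
Local Notation w := (omega R n).

Lemma omegaX m : w ^+ m =
  Complex (cos (m%:R * (2 * pi / n%:R))) (- sin (m%:R * (2 * pi / n%:R))).
Proof.
elim: m => [|m IH]; first by rewrite expr0 mul0r cos0 sin0 oppr0.
rewrite exprSr IH /omega -[m.+1]addn1 natrD (mulrDl m%:R) mul1r cosD sinD.
by apply/eqP; rewrite eq_complex /=; apply/andP; split; apply/eqP; ring.
Qed.

Hypothesis n_gt0 : (0 < n)%N.

Lemma omega_prim : n.-primitive_root w.
Proof.
have pi_n m : m%:R * (2 * pi / n%:R) = (m%:R * pi / n%:R) *+ 2 :> R.
  by rewrite mulr2n; ring.
apply/andP; split => //; apply/forallP => i; rewrite unity_rootE omegaX pi_n.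
have [->|i_neq] := eqVneq i.+1 n.
  rewrite -mulrA mulrCA mulfV ?mulr1 ?pnatr_eq0 -?lt0n //.
  by rewrite cos2pi sin2pi oppr0 eqxx.
rewrite eqbF_neg cos_mulr2n; set y := _ / _; apply/eqP => -[cos1 _].
have y_pi : 0 < y < pi.
  rewrite divr_gt0 ?mulr_gt0 ?ltr0n ?pi_gt0 //= ltr_pdivrMr ?ltr0n //.
  by rewrite mulrC ltr_pM2l ?pi_gt0 // ltr_nat ltn_neqAle i_neq ltn_ord.
have := sin_gt0_pi y_pi; have := cos2Dsin2 y; move: cos1; nra.
Qed.

End Omega.

Section DFT.
Variables (C : numClosedFieldType) (p : nat) (w : C).
Local Notation n := p.+1.
Hypothesis w_prim : n.-primitive_root w.

Let w_unit : w \is a GRing.unit.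
Proof. by rewrite unitfE (prim_root_eq0 w_prim). Qed.

Lemma prim_root_conjC : w^* = w^-1.
Proof. exact: unity_root_conjC (ltn0Sn p) (prim_expr_order w_prim). Qed.

Lemma prim_rootXN l (k : 'I_n) : w ^+ (l * (- k)%R) = w^-1 ^+ (l * k).
Proof.
have wNk : w ^+ (- k)%R = w^-1 ^+ k.
  rewrite exprVn; apply: (mulIr (unitrX k w_unit)); rewrite mulVr ?unitrX //.
  by rewrite -exprD -(prim_expr_mod w_prim) modnDml subnK ?modnn // ltnW.
by rewrite mulnC exprM wNk -exprM mulnC.
Qed.

Lemma prim_root_orth (l j : 'I_n) :
  \sum_(k < n) w ^+ (k * l) * w^-1 ^+ (k * j) = (l == j)%:R * n%:R.
Proof.
set q := w ^+ l / w ^+ j.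
have -> : \sum_(k < n) w ^+ (k * l) * w^-1 ^+ (k * j) = \sum_(k < n) q ^+ k.
  by apply: eq_bigr => k _; rewrite /q exprMn !exprVn -!exprM !(mulnC k).
have wjU := unitrX j w_unit.
rewrite sum_unity_rootX; last first.
  rewrite /q exprMn exprVn -!exprM !(mulnC _ n) !exprM (prim_expr_order w_prim).
  by rewrite !expr1n invr1 mulr1.
congr (_%:R * _); rewrite -(inj_eq (mulIr wjU)) divrK // mul1r.
by rewrite (eq_prim_root_expr w_prim) !modn_small.
Qed.

Definition dft (b : 'I_n -> C) (k : 'I_n) : C := \sum_(l < n) w ^+ (l * k) * b l.
Definition idft (b : 'I_n -> C) (l : 'I_n) : C :=
  n%:R^-1 * \sum_(k < n) w^-1 ^+ (l * k) * b k.

Lemma dft_idft (b : 'I_n -> C) : dft (idft b) =1 b.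
Proof.
move=> k; rewrite /dft /idft.
transitivity (n%:R^-1 * \sum_(k' < n) b k' *
    \sum_(l < n) w ^+ (l * k) * w^-1 ^+ (l * k')).
  under eq_bigr => l _ do rewrite mulrCA big_distrr /=.
  rewrite -big_distrr /= exchange_big /=; congr (_ * _); apply: eq_bigr => k' _.
  by rewrite big_distrr /=; apply: eq_bigr => l _; rewrite [RHS]mulrC mulrA.
under eq_bigr => k' _ do rewrite prim_root_orth.
rewrite (bigD1 k) //= eqxx mul1r big1 ?addr0; first by rewrite mulrC mulfK ?pnatr_eq0.
by move=> k' /negbTE; rewrite eq_sym => ->; rewrite mul0r mulr0.
Qed.

Lemma dft_real (b : 'I_n -> C) :
  (forall l, (b l)^* = b l) -> forall k, dft b (- k) = (dft b k)^*.
Proof.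
move=> b_real k; rewrite /dft rmorph_sum; apply: eq_bigr => l _.
by rewrite rmorphM rmorphXn /= prim_root_conjC b_real prim_rootXN.
Qed.

Lemma idft_conj_sym (b : 'I_n -> C) :
  (forall k, b (- k) = (b k)^*) -> forall l, (idft b l)^* = idft b l.
Proof.
move=> b_sym l; rewrite /idft rmorphM fmorphV rmorph_nat rmorph_sum; congr (_ * _).
rewrite (reindex_inj oppr_inj); apply: eq_bigr => k _ /=.
by rewrite rmorphM /= b_sym conjCK exprVn prim_rootXN exprVn invrK rmorphXn /= prim_root_conjC exprVn.
Qed.

Lemma dft_parseval (b : 'I_n -> C) :
  \sum_(k < n) dft b k * (dft b k)^* = n%:R * \sum_(l < n) b l * (b l)^*.
Proof.
transitivity (\sum_(k < n) \sum_(l < n) \sum_(l' < n)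
    b l * (b l')^* * (w ^+ (k * l) * w^-1 ^+ (k * l'))).
  apply: eq_bigr => k _; rewrite /dft rmorph_sum big_distrl /=.
  apply: eq_bigr => l _; rewrite big_distrr /=; apply: eq_bigr => l' _.
  by rewrite rmorphM rmorphXn /= prim_root_conjC !(mulnC k) mulrACA mulrC.
rewrite exchange_big big_distrr /=; apply: eq_bigr => l _.
rewrite exchange_big /=.
under eq_bigr => l' _ do rewrite -big_distrr prim_root_orth /=.
rewrite (bigD1 l) //= eqxx mul1r big1 ?addr0; first by rewrite mulrC.
by move=> l' /negbTE; rewrite eq_sym => ->; rewrite mul0r mulr0.
Qed.

End DFT.

Section ConjTranspose.
Variable R : realType.
Local Notation C := R[i].

Lemma ctrM a b c (A : 'M[C]_(a, b)) (B : 'M[C]_(b, c)) : ctr (A *m B) = ctr B *m ctr A.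
Proof. by rewrite /ctr map_mxM trmx_mul. Qed.

Lemma ctrK a b (A : 'M[C]_(a, b)) : ctr (ctr A) = A.
Proof. by apply/matrixP => i j; rewrite !mxE conjCK. Qed.

Lemma ctrB a b (A B : 'M[C]_(a, b)) : ctr (A - B) = ctr A - ctr B.
Proof. by rewrite /ctr map_mxB linearB. Qed.

Lemma ctr_col a b c (A : 'M[C]_(a, c)) (B : 'M[C]_(b, c)) :
  ctr (col_mx A B) = row_mx (ctr A) (ctr B).
Proof. by rewrite /ctr map_col_mx tr_col_mx. Qed.

Lemma ctr_block a b c d (A : 'M[C]_(a, c)) (B : 'M[C]_(a, d))
    (D : 'M[C]_(b, c)) (E : 'M[C]_(b, d)) :
  ctr (block_mx A B D E) = block_mx (ctr A) (ctr D) (ctr B) (ctr E).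
Proof. by rewrite /ctr map_block_mx tr_block_mx. Qed.

Definition fnorm2 a b (M : 'M[C]_(a, b)) : C := \tr (M *m ctr M).

Lemma fnorm2E a b (M : 'M[C]_(a, b)) : fnorm2 M = \sum_i \sum_j M i j * (M i j)^*.
Proof. by apply: eq_bigr => i _; rewrite mxE; apply: eq_bigr => j _; rewrite !mxE. Qed.

Lemma fnorm2_ge0 a b (M : 'M[C]_(a, b)) : 0 <= fnorm2 M.
Proof. by rewrite fnorm2E; do 2!apply: sumr_ge0 => ? _; exact: mul_conjC_ge0. Qed.

Lemma fnorm2_ctr a b (M : 'M[C]_(a, b)) : fnorm2 (ctr M) = fnorm2 M.
Proof. by rewrite /fnorm2 ctrK mxtrace_mulC. Qed.

Lemma fnorm2_block a b c d (A : 'M[C]_(a, c)) (B : 'M[C]_(a, d))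
    (D : 'M[C]_(b, c)) (E : 'M[C]_(b, d)) :
  fnorm2 (block_mx A B D E) = fnorm2 A + fnorm2 B + fnorm2 D + fnorm2 E.
Proof. by rewrite /fnorm2 ctr_block mulmx_block mxtrace_block !mxtraceD !addrA. Qed.

Lemma fnorm2B a b (P Q : 'M[C]_(a, b)) : fnorm2 (P - Q) =
  \tr (P *m ctr P) - \tr (P *m ctr Q) - \tr (Q *m ctr P) + \tr (Q *m ctr Q).
Proof. by rewrite /fnorm2 ctrB mulmxBl !mulmxBr !linearB /= opprK addrA. Qed.

Lemma mxtrace_rot a b c d (X : 'M[C]_(a, b)) (Y : 'M[C]_(c, b)) (Z : 'M[C]_(c, d))
    (W : 'M[C]_(a, d)) :
  \tr (X *m ctr Y *m Z *m ctr W) = \tr (ctr W *m X *m (ctr Y *m Z)).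
Proof. by rewrite mxtrace_mulC !mulmxA. Qed.

Lemma fnorm2_balanced a b r s (L : 'M[C]_(a, r)) (K : 'M[C]_(b, r))
    (A : 'M[C]_(a, s)) (B : 'M[C]_(b, s)) :
  ctr L *m L = ctr K *m K -> ctr A *m A = ctr B *m B ->
  4%:R * fnorm2 (L *m ctr K - A *m ctr B)
  - fnorm2 (col_mx L K *m ctr (col_mx L K) - col_mx A B *m ctr (col_mx A B))
  = 2%:R * fnorm2 (ctr L *m A - ctr K *m B).
Proof.
move=> LK AB; rewrite !ctr_col !mul_col_row opp_block_mx add_block_mx fnorm2_block.
have -> : K *m ctr L - B *m ctr A = ctr (L *m ctr K - A *m ctr B).
  by rewrite ctrB !ctrM !ctrK.
rewrite fnorm2_ctr !fnorm2B !ctrM !ctrK !mulmxA !mxtrace_rot -LK -AB.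
rewrite -!(mulmxA (ctr _ *m _)).
rewrite ![\tr (ctr A *m L *m _)]mxtrace_mulC ![\tr (ctr B *m K *m _)]mxtrace_mulC.
ring.
Qed.

End ConjTranspose.

Lemma fnorm2_balanced_le (R : realType) a b r s (L : 'M[R[i]]_(a, r))
    (K : 'M[R[i]]_(b, r)) (A : 'M[R[i]]_(a, s)) (B : 'M[R[i]]_(b, s)) :
  ctr L *m L = ctr K *m K -> ctr A *m A = ctr B *m B ->
  fnorm2 (col_mx L K *m ctr (col_mx L K) - col_mx A B *m ctr (col_mx A B))
  <= 4%:R * fnorm2 (L *m ctr K - A *m ctr B).
Proof.
move=> LK AB; rewrite -subr_ge0 fnorm2_balanced //.
by rewrite mulr_ge0 ?ler0n ?fnorm2_ge0.
Qed.

Section DiagSqrt.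
Variables (R : realType) (r : nat) (D : 'M[R[i]]_r).
Hypothesis D_diag : forall i j, i != j -> D i j = 0.
Hypothesis D_ge0 : forall i, 0 <= D i i.

Lemma diag_ge0 i j : 0 <= D i j.
Proof. by have [<-|/D_diag->] := eqVneq i j. Qed.

Lemma ctr_sqrt_diag : ctr (map_mx sqrtC D) = map_mx sqrtC D.
Proof.
apply/matrixP => i j; rewrite !mxE geC0_conj ?sqrtC_ge0 ?diag_ge0 //.
by have [->|ij] := eqVneq i j; rewrite // !D_diag // eq_sym.
Qed.

Lemma sqrt_diag_mul : map_mx sqrtC D *m map_mx sqrtC D = D.
Proof.
have sD0 i j : i != j -> sqrtC (D i j) = 0 by move/D_diag->; rewrite sqrtC0.
apply/matrixP => i j; rewrite !mxE (bigD1 i) //= big1 => [|l li]; last first.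
  by rewrite !mxE sD0 ?mul0r // eq_sym.
rewrite addr0 !mxE; have [<-|ij] := eqVneq i j; first by rewrite -expr2 sqrtCK.
by rewrite (sD0 _ _ ij) (D_diag ij) mulr0.
Qed.

End DiagSqrt.

Definition tfrob2 (R : realType) n1 n2 n3 (A : tensor R n1 n2 n3) : R :=
  \sum_(k < n3) \sum_(i < n1) \sum_(j < n2) A k i j ^+ 2.

Section TensorFourier.
Variables (R : realType) (p : nat).
Local Notation n := p.+1.
Local Notation C := R[i].
Local Notation w := (omega R n).

Let w_prim : n.-primitive_root w := omega_prim R (ltn0Sn p).

Definition conj_sym a b (B : 'I_n -> 'M[C]_(a, b)) :=
  forall k, B (- k) = map_mx Num.conj (B k).

Lemma fftE n1 n2 (A : tensor R n1 n2 n) k i j :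
  fft A k i j = dft w (fun l => Complex (A l i j) 0) k.
Proof. by rewrite /fft summxE; apply: eq_bigr => l _; rewrite !mxE. Qed.

Lemma fft_conj_sym n1 n2 (A : tensor R n1 n2 n) : conj_sym (fft A).
Proof.
move=> k; apply/matrixP => i j; rewrite mxE !fftE (dft_real w_prim) // => l.
exact: conjc_real.
Qed.

Lemma conj_sym_mul a b c (B : 'I_n -> 'M[C]_(a, b)) (D : 'I_n -> 'M[C]_(b, c)) :
  conj_sym B -> conj_sym D -> conj_sym (fun k => B k *m D k).
Proof. by move=> B_sym D_sym k; rewrite B_sym D_sym map_mxM. Qed.

Lemma conj_sym_ctr a b (B : 'I_n -> 'M[C]_(a, b)) :
  conj_sym B -> conj_sym (fun k => ctr (B k)).
Proof. by move=> B_sym k; rewrite B_sym /ctr map_trmx. Qed.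

Lemma fft_ifft a b (B : 'I_n -> 'M[C]_(a, b)) : conj_sym B -> fft (ifft B) =1 B.
Proof.
move=> B_sym k; apply/matrixP => i j; rewrite fftE -[RHS](dft_idft w_prim (fun k => B k i j)).
apply: eq_bigr => l _; congr (_ * _); rewrite /ifft ffunE mxE.
have -> : (n%:R^-1 *: \sum_(k < n) w^-1 ^+ (l * k) *: B k) i j
    = idft w (fun k => B k i j) l.
  by rewrite mxE summxE; congr (_ * _); apply: eq_bigr => k' _; rewrite mxE.
by apply: Re_conj_fixed; apply: (idft_conj_sym w_prim) => k'; rewrite B_sym mxE.
Qed.

Lemma fft_tprod n1 n2 n4 (A : tensor R n1 n2 n) (B : tensor R n2 n4 n) k :
  fft (tprod A B) k = fft A k *m fft B k.
Proof. exact/fft_ifft/conj_sym_mul/fft_conj_sym/fft_conj_sym. Qed.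

Lemma fft_ttr n1 n2 (A : tensor R n1 n2 n) k : fft (ttr A) k = ctr (fft A k).
Proof. exact/fft_ifft/conj_sym_ctr/fft_conj_sym. Qed.

Lemma fft_tstack n1 n2 r (A : tensor R n1 r n) (B : tensor R n2 r n) k :
  fft (tstack A B) k = col_mx (fft A k) (fft B k).
Proof.
apply/matrixP => i j; rewrite fftE mxE /dft.
under eq_bigr => l _ do rewrite ffunE mxE.
by case: (split i) => i'; rewrite fftE.
Qed.

Lemma fft_tid m k : fft (tid R m n) k = 1%:M.
Proof.
apply/matrixP => i j; rewrite fftE /dft (bigD1 ord0) //= big1 ?addr0 => [|l l_neq0].
  by rewrite mul0n expr0 mul1r ffunE /= !mxE; case: (i == j).
by rewrite ffunE (negbTE (l_neq0 : l != 0%N :> nat)) mxE (_ : Complex 0 0 = 0) ?mulr0.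
Qed.

Lemma fftB n1 n2 (A B : tensor R n1 n2 n) k : fft (A - B) k = fft A k - fft B k.
Proof.
apply/matrixP => i j; rewrite !mxE !fftE -sumrB; apply: eq_bigr => l _.
by rewrite !ffunE !mxE -mulrBr; congr (_ * _); apply/eqP; rewrite eq_complex /= subr0 !eqxx.
Qed.

Lemma tfrob2_parseval n1 n2 (A : tensor R n1 n2 n) :
  n%:R * Complex (tfrob2 A) 0 = \sum_(k < n) fnorm2 (fft A k).
Proof.
pose a i j l : C := Complex (A l i j) 0.
have -> : Complex (tfrob2 A) 0 = \sum_i \sum_j \sum_(l < n) a i j l * (a i j l)^*.
  rewrite complexr0 rmorph_sum.
  under eq_bigr => l _ do rewrite rmorph_sum.
  under eq_bigr => l _ do under eq_bigr => i _ do rewrite rmorph_sum.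
  rewrite exchange_big; apply: eq_bigr => i _ /=.
  rewrite exchange_big; apply: eq_bigr => j _ /=; apply: eq_bigr => l _.
  by rewrite rmorphXn expr2; congr (_ * _); exact/esym/conjc_real.
under [RHS]eq_bigr => k _ do rewrite fnorm2E.
rewrite big_distrr [RHS]exchange_big; apply: eq_bigr => i _ /=.
rewrite big_distrr [RHS]exchange_big; apply: eq_bigr => j _ /=.
by under [RHS]eq_bigr => k _ do rewrite fftE; rewrite (dft_parseval w_prim).
Qed.

Lemma tfrob_le_slices n1 n2 m1 m2 (c : R) (A : tensor R n1 n2 n) (B : tensor R m1 m2 n) :
  0 <= c -> (forall k, fnorm2 (fft A k) <= Complex c 0 * fnorm2 (fft B k)) ->
  tfrob A <= Num.sqrt c * tfrob B.
Proof.
move=> c_ge0 AB; rewrite -sqrtrM // ler_wsqrtr //.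
rewrite -(ler_pM2l (ltr0Sn _ p)) -lecR !rmorphM /= !rmorph_nat.
by rewrite -!complexr0 mulrCA !tfrob2_parseval big_distrr; apply: ler_sum => k _.
Qed.

Lemma fft_fdiag_ge0 r (S : tensor R r r n) : fdiag_nonneg S ->
  forall k i j, 0 <= fft S k i j.
Proof.
move=> S_diag k; apply: diag_ge0 => [i j|i]; first exact: (proj1 (S_diag k i j)).
exact: (proj2 (S_diag k i i)).
Qed.

Lemma fft_tsqrt r (S : tensor R r r n) : fdiag_nonneg S ->
  forall k, fft (tsqrt S) k = map_mx sqrtC (fft S k).
Proof.
move=> S_diag; apply: fft_ifft => k; apply/matrixP => i j.
have S_ge0 := fft_fdiag_ge0 S_diag.
by rewrite !mxE fft_conj_sym mxE !geC0_conj ?sqrtC_ge0.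
Qed.

Lemma fft_factor_gap_le n1 n2 r rs (L : tensor R n1 r n) (Rt : tensor R n2 r n)
    (Xs : tensor R n1 n2 n) (U : tensor R n1 rs n) (S : tensor R rs rs n)
    (V : tensor R n2 rs n) :
  tprod (ttr L) L = tprod (ttr Rt) Rt -> compact_tsvd Xs U S V ->
  let F := tstack L Rt in
  let Fs := tstack (tprod U (tsqrt S)) (tprod V (tsqrt S)) in
  forall k, fnorm2 (fft (tprod F (ttr F) - tprod Fs (ttr Fs)) k)
            <= 4%:R * fnorm2 (fft (tprod L (ttr Rt) - Xs) k).
Proof.
move=> LR [-> UU VV S_diag] F Fs k.
have fft_eq a b (T1 T2 : tensor R a b n) : T1 = T2 -> fft T1 k = fft T2 k by move->.
move: (fft_eq _ _ _ _ LR) (fft_eq _ _ _ _ UU) (fft_eq _ _ _ _ VV).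
rewrite /F /Fs !fftB !fft_tprod !fft_ttr !fft_tstack !fft_tprod !fft_tsqrt // !fft_tid.
move=> LRk UUk VVk.
have S_offdiag i j : i != j -> fft S k i j = 0 := proj1 (S_diag k i j).
have S_ge0 i : 0 <= fft S k i i := proj2 (S_diag k i i).
set s := map_mx sqrtC (fft S k).
have s_ctr : ctr s = s := ctr_sqrt_diag S_offdiag S_ge0.
have s_sq : s *m s = fft S k := sqrt_diag_mul S_offdiag.
have -> : fft U k *m fft S k *m ctr (fft V k) = (fft U k *m s) *m ctr (fft V k *m s).
  by rewrite ctrM s_ctr mulmxA -(mulmxA (fft U k) s s) s_sq.
apply: fnorm2_balanced_le => //.
rewrite !ctrM s_ctr -!mulmxA (mulmxA (ctr (fft U k))) (mulmxA (ctr (fft V k))).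
by rewrite UUk VVk !mul1mx.
Qed.

End TensorFourier.

Theorem lemma10 (R : realType) (n1 n2 n3 r rs : nat)
  (L : tensor R n1 r n3) (Rt : tensor R n2 r n3) (X Xs : tensor R n1 n2 n3)
  (U : tensor R n1 rs n3) (S : tensor R rs rs n3) (V : tensor R n2 rs n3) :
  tprod (ttr L) L = tprod (ttr Rt) Rt ->
  X = tprod L (ttr Rt) ->
  compact_tsvd Xs U S V ->
  tubal_rank Xs = rs ->
  let F := tstack L Rt in
  let Fs := tstack (tprod U (tsqrt S)) (tprod V (tsqrt S)) in
  tfrob (tprod F (ttr F) - tprod Fs (ttr Fs)) <= 2 * tfrob (X - Xs).
Proof.
case: n3 L Rt X Xs U S V => [|p] L Rt X Xs U S V LR -> svd _; cbv zeta.
  by rewrite /tfrob !big_ord0 sqrtr0 mulr0.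
have sqrt4 : Num.sqrt 4 = 2 :> R.
  by rewrite (_ : 4 = 2 ^+ 2) ?sqrtr_sqr ?ger0_norm // expr2 -natrM.
rewrite -sqrt4; apply: tfrob_le_slices; first by rewrite ler0n.
by move=> k; rewrite complexr0 rmorph_nat; apply: fft_factor_gap_le.
Qed.
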